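(* Let $\mathcal X,\mathcal U$ be finite nonempty sets, $f:\mathcal X\times\mathcal U\to\mathcal X$ and $\ell,g:\mathcal X\to\mathbb R$. Let $V_{\mathrm A}^*(x)=\max_{\pi\in\Pi}\min_{\tau\in\mathbb N}g(\xi_x^\pi(\tau))$, $\tilde\ell(x)=\min\{\ell(x),V_{\mathrm A}^*(x)\}$, $$\tilde v_{\mathrm{RA}}^*(x)=\max_{\mathbf u\in\mathbb U}\max_{\tau\in\mathbb N}\min\Big\{\tilde\ell(\xi_x^{\mathbf u}(\tau)),\min_{\kappa\le\tau}g(\xi_x^{\mathbf u}(\kappa))\Big\},$$ $$v_{\mathrm{RAA}}^*(x)=\max_{\mathbf u\in\mathbb U}\min\Big\{\max_{\tau\in\mathbb N}\ell(\xi_x^{\mathbf u}(\tau)),\min_{\kappa\in\mathbb N}g(\xi_x^{\mathbf u}(\kappa))\Big\}.$$ Then $v_{\mathrm{RAA}}^*(x)=\tilde v_{\mathrm{RA}}^*(x)$ for every $x\in\mathcal X$.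
   Context: $\mathbb N=\{0,1,\dots\}$; $\Pi$ is the set of maps $\mathcal X\to\mathcal U$; $\mathbb U$ is the set of sequences $\mathbb N\to\mathcal U$. For $\pi\in\Pi$: $\xi_x^\pi(0)=x$, $\xi_x^\pi(t+1)=f(\xi_x^\pi(t),\pi(\xi_x^\pi(t)))$. For $\mathbf u\in\mathbb U$: $\xi_x^{\mathbf u}(0)=x$, $\xi_x^{\mathbf u}(t+1)=f(\xi_x^{\mathbf u}(t),\mathbf u(t))$. *)

From HB Require Import structures.
From mathcomp Require Import all_boot all_order all_algebra.
From mathcomp Require Import all_classical all_reals.
Set Implicit Arguments. Unset Strict Implicit. Unset Printing Implicit Defensive.
Import Order.TTheory GRing.Theory Num.Theory.
Local Open Scope classical_set_scope.
Local Open Scope ring_scope.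

(* Reach-avoid on a finite deterministic system.  max/min over infinite index
   sets are rendered as sup/inf (all sets involved take values in the finite
   images of g and l, so sup/inf are attained, i.e. are max/min). *)

Section Defs.
Variables (X U : finType) (f : X -> U -> X).

Fixpoint traj_pi (pi : X -> U) (x : X) (t : nat) : X :=
  match t with
  | 0 => x
  | t'.+1 => let y := traj_pi pi x t' in f y (pi y)
  end.

Fixpoint traj_u (u : nat -> U) (x : X) (t : nat) : X :=
  match t with
  | 0 => x
  | t'.+1 => f (traj_u u x t') (u t')
  end.

Variable R : realType.
Variables (l g : X -> R).

Definition VA (x : X) : R :=
  sup (range (fun pi : X -> U => inf (range (fun t : nat => g (traj_pi pi x t))))).

Definition ltil (x : X) : R := Num.min (l x) (VA x).

Definition vRA_til (x : X) : R :=
  sup (range (fun u : nat -> U =>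
    sup (range (fun tau : nat =>
      Num.min (ltil (traj_u u x tau))
              (inf [set g (traj_u u x k) | k in [set k : nat | (k <= tau)%N]]))))).

Definition vRAA (x : X) : R :=
  sup (range (fun u : nat -> U =>
    Num.min (sup (range (fun tau : nat => l (traj_u u x tau))))
            (inf (range (fun k : nat => g (traj_u u x k)))))).
End Defs.

(** A feedback policy can imitate any open-loop control sequence along its own
    trajectory, since the system is deterministic: at a state visited by the
    sequence, apply the input the sequence uses there.  Hence, if an input
    sequence keeps [g] above [m] forever and reaches the target [l] at time
    [tau], then the state at time [tau] has avoid value [V_A^*] at least [m],
    which gives [v_RAA^* <= ~v_RA^*].  Conversely, a prefix of an input
    sequence up to time [tau] followed by the open-loop unrolling of a policy
    attaining [V_A^*] at the state reached gives [~v_RA^* <= v_RAA^*].  All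
    sups and infs involved range over values of [l] and [g] on the finite
    state space, so they are bounded. *)

From mathcomp Require Import all_boot all_order all_algebra.
From mathcomp Require Import all_classical all_reals.
Import Order.TTheory GRing.Theory Num.Theory.
Local Open Scope classical_set_scope.
Local Open Scope ring_scope.

Section Trajectories.
Context {X U : finType} (f : X -> U -> X).

Lemma eq_traj_u_prefix (u v : nat -> U) x t :
  (forall s, (s < t)%N -> u s = v s) -> traj_u f u x t = traj_u f v x t.
Proof.
elim: t => [//|t IH] /= Huv.
by rewrite IH ?Huv // => s lt_st; apply: Huv; apply: ltnW.
Qed.

Lemma traj_u_shift (u : nat -> U) x tau t :
  traj_u f u x (tau + t) = traj_u f (fun s => u (tau + s)%N) (traj_u f u x tau) t.
Proof. by elim: t => [|t IH] /=; rewrite ?addn0 // addnS /= IH. Qed.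

Lemma traj_u_feedback (pi : X -> U) x t :
  traj_u f (fun s => pi (traj_pi f pi x s)) x t = traj_pi f pi x t.
Proof. by elim: t => [//|t IH] /=; rewrite IH. Qed.

Definition splice (tau : nat) (u v : nat -> U) : nat -> U :=
  fun t => if (t < tau)%N then u t else v (t - tau)%N.

Lemma traj_u_splice_prefix tau u v x t :
  (t <= tau)%N -> traj_u f (splice tau u v) x t = traj_u f u x t.
Proof.
move=> le_t_tau; apply: eq_traj_u_prefix => s lt_st.
by rewrite /splice (leq_trans lt_st le_t_tau).
Qed.

Lemma traj_u_splice_suffix tau u v x t :
  traj_u f (splice tau u v) x (tau + t) = traj_u f v (traj_u f u x tau) t.
Proof.
rewrite traj_u_shift traj_u_splice_prefix //.
by apply: eq_traj_u_prefix => s _; rewrite /splice ltnNge leq_addr addKn.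
Qed.

Lemma policy_follows_traj_u (u : nat -> U) x :
  exists pi : X -> U, forall t, exists k, traj_pi f pi x t = traj_u f u x k.
Proof.
pose visited z := exists k, traj_u f u x k = z.
have [pi pi_visited] :
    sigT (fun pi : X -> U => forall z, visited z -> visited (f z (pi z))).
  apply: (@choice _ _ (fun z c => visited z -> visited (f z c))) => z.
  have [[k <-]|unvisited] := pselect (visited z).
    by exists (u k) => _; exists k.+1.
  by exists (u 0%N) => /unvisited.
exists pi; elim=> [|t [k IH]] /=; first by exists 0%N.
have [k' <-] : visited (f (traj_pi f pi x t) (pi (traj_pi f pi x t))).
  by apply: pi_visited; exists k.
by exists k'.
Qed.

End Trajectories.

Section SupInf.
Context {R : realType}.

Lemma min_sup_le (S : set R) a M : S !=set0 ->
  (forall s, S s -> Num.min s a <= M) -> Num.min (sup S) a <= M.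
Proof.
move=> S0 HS; have [le_a_M|lt_M_a] := leP a M.
  by rewrite ge_min le_a_M orbT.
suff : sup S <= M by rewrite ge_min => ->.
apply: ge_sup => // s Ss; have := HS s Ss.
by rewrite ge_min (leNgt a) lt_M_a orbF.
Qed.

Context {X : finType} (h : X -> R).

Lemma has_lbound_img {T} (e : T -> X) (A : set T) :
  has_lbound [set h (e t) | t in A].
Proof. by exists (\big[Num.min/0]_z h z) => _ [t _ <-]; apply: bigmin_le. Qed.

Lemma has_ubound_img {T} (e : T -> X) (A : set T) :
  has_ubound [set h (e t) | t in A].
Proof. by exists (\big[Num.max/0]_z h z) => _ [t _ <-]; apply: le_bigmax. Qed.

Lemma inf_img_le {T} (e : T -> X) (A : set T) t :
  A t -> inf [set h (e s) | s in A] <= h (e t).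
Proof. by move=> At; apply: ge_inf; [apply: has_lbound_img | exists t]. Qed.

Lemma le_sup_img {T} (e : T -> X) (A : set T) t :
  A t -> h (e t) <= sup [set h (e s) | s in A].
Proof. by move=> At; apply: ub_le_sup; [apply: has_ubound_img | exists t]. Qed.

End SupInf.

Section ReachAvoid.
Context {X U : finType} (f : X -> U -> X) {R : realType} (l g : X -> R).

Definition raa_payoff (u : nat -> U) x : R :=
  Num.min (sup (range (fun tau => l (traj_u f u x tau))))
          (inf (range (fun k => g (traj_u f u x k)))).

Definition ra_payoff (u : nat -> U) x tau : R :=
  Num.min (ltil f l g (traj_u f u x tau))
          (inf [set g (traj_u f u x k) | k in [set k : nat | (k <= tau)%N]]).

Lemma inf_traj_pi_le_VA pi x :
  inf (range (fun t => g (traj_pi f pi x t))) <= VA f g x.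
Proof.
apply: ub_le_sup; last by exists pi.
exists (g x) => _ [pi' _ <-].
by apply: (inf_img_le g (traj_pi f pi' x) _ 0%N).
Qed.

Lemma inf_traj_u_le_VA u x tau :
  inf (range (fun k => g (traj_u f u x k))) <= VA f g (traj_u f u x tau).
Proof.
have [pi follows] :=
  policy_follows_traj_u f (fun s => u (tau + s)%N) (traj_u f u x tau).
apply: le_trans (inf_traj_pi_le_VA pi _).
apply: lb_le_inf; first by exists (g (traj_pi f pi (traj_u f u x tau) 0)), 0%N.
move=> _ [t _ <-]; have [k ->] := follows t; rewrite -traj_u_shift.
exact: inf_img_le.
Qed.

Lemma raa_payoff_le_vRAA u x : raa_payoff u x <= vRAA f l g x.
Proof.
apply: ub_le_sup; last by exists u.
exists (g x) => _ [v _ <-]; rewrite ge_min; apply/orP; right.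
by apply: (inf_img_le g (traj_u f v x) _ 0%N).
Qed.

Lemma ra_payoff_le_g u x tau : ra_payoff u x tau <= g x.
Proof.
rewrite ge_min; apply/orP; right.
by apply: (inf_img_le g (traj_u f u x) _ 0%N).
Qed.

Lemma ra_payoff_le_vRA_til u x tau : ra_payoff u x tau <= vRA_til f l g x.
Proof.
apply: le_trans (_ : sup (range (ra_payoff u x)) <= _).
  apply: ub_le_sup; last by exists tau.
  by exists (g x) => _ [t _ <-]; apply: ra_payoff_le_g.
apply: ub_le_sup; last by exists u.
exists (g x) => _ [v _ <-]; apply: ge_sup; first by exists (ra_payoff v x 0), 0%N.
by move=> _ [t _ <-]; apply: ra_payoff_le_g.
Qed.

Lemma raa_payoff_le_vRA_til u x : raa_payoff u x <= vRA_til f l g x.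
Proof.
rewrite /raa_payoff; set m := inf _.
apply: min_sup_le; first by exists (l x), 0%N.
move=> _ [tau _ <-]; apply: le_trans (ra_payoff_le_vRA_til u x tau).
have m_le_prefix :
    m <= inf [set g (traj_u f u x k) | k in [set k : nat | (k <= tau)%N]].
  apply: lb_le_inf; first by exists (g x), 0%N.
  by move=> _ [k _ <-]; apply: inf_img_le.
rewrite /ra_payoff /ltil !le_min !ge_min lexx m_le_prefix inf_traj_u_le_VA.
by rewrite !orbT.
Qed.

Lemma ra_payoff_le_vRAA u x tau : ra_payoff u x tau <= vRAA f l g x.
Proof.
rewrite /ra_payoff /ltil; set y := traj_u f u x tau.
rewrite (minC (l y)) -minA.
apply: min_sup_le; first by eexists; exists (fun=> u 0%N).
move=> _ [pi _ <-].
pose w := splice tau u (fun t => pi (traj_pi f pi y t)).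
have w_suffix t : traj_u f w x (tau + t) = traj_pi f pi y t.
  by rewrite traj_u_splice_suffix traj_u_feedback.
apply: le_trans (raa_payoff_le_vRAA w x); rewrite le_min; apply/andP; split.
  rewrite !ge_min; apply/orP; right; apply/orP; left.
  have -> : y = traj_u f w x tau by rewrite traj_u_splice_prefix.
  exact: le_sup_img.
apply: lb_le_inf; first by exists (g x), 0%N.
move=> _ [k _ <-]; have [le_k_tau|lt_tau_k] := leqP k tau.
  rewrite traj_u_splice_prefix // !ge_min; apply/orP; right; apply/orP; right.
  exact: inf_img_le.
rewrite ge_min -(subnKC (ltnW lt_tau_k)) w_suffix; apply/orP; left.
exact: inf_img_le.
Qed.

End ReachAvoid.

Theorem mainTheorem8 (X U : finType) (f : X -> U -> X) (R : realType)
  (l g : X -> R) (u0 : U) :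
  forall x : X, vRAA f l g x = vRA_til f l g x.
Proof.
move=> x; apply/eqP; rewrite eq_le; apply/andP; split.
- apply: ge_sup; first by eexists; exists (fun=> u0).
  by move=> _ [u _ <-]; apply: raa_payoff_le_vRA_til.
- apply: ge_sup; first by eexists; exists (fun=> u0).
  move=> _ [u _ <-]; apply: ge_sup; first by exists (ra_payoff f l g u x 0), 0%N.
  by move=> _ [tau _ <-]; apply: ra_payoff_le_vRAA.
Qed.
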